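(* Let $L$ be an even hyperbolic lattice and $L'$ an even overlattice of $L$. Then there exist chambers $\mathcal D_L$ of $L$ and $\mathcal D_{L'}$ of $L'$ (in the common hyperbolic space $\mathbb H_L=\mathbb H_{L'}$) such that $\mathcal D_{L'}\subseteq\mathcal D_L$. For such choices, the exceptional lattices satisfy $E(L)\subseteq E(L')$.
   Context: All lattices are even: a lattice is a free $\mathbb Z$-module $L$ of finite rank with a non-degenerate symmetric bilinear form $(x.y)\in\mathbb Z$ such that $x^2:=(x.x)$ is even for all $x$. $L$ is hyperbolic if its signature is $(1,\mathrm{rk}L-1)$. A root is a vector $r\in L$ with $r^2=-2$. For hyperbolic $L$, fix a connected component $\mathcal P_L$ of $\{x\in L\otimes\mathbb R: x^2>0\}$, let $\mathbb H_L=\{x\in\mathcal P_L: x^2=1\}$, and let $O^+(L)$ be the group of isometries of $L$ preserving $\mathcal P_L$. The Weyl group $W(L)\subseteq O^+(L)$ is generated by the reflections $\phi_r(v)=v+(v.r)r$ for roots $r$. The chambers are the connected components of $\mathbb H_L\setminus\bigcup_r r^\perp$ (union over all roots $r$); $W(L)$ acts simply transitively on them. Fix a chamber $\mathcal D_L$; the symmetry group $\mathrm{Aut}(\mathcal D_L)$ is the subgroup of $O^+(L)$ preserving $\mathcal D_L$. The exceptional lattice $E(L)\subseteq L$ is the sublattice of vectors of $L$ whose orbit under $\mathrm{Aut}(\mathcal D_L)$ is finite. An overlattice of $L$ is a lattice $L'\supseteq L$ of the same rank whose form restricts to that of $L$. *)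

From HB Require Import structures.
From mathcomp Require Import all_boot all_order all_algebra.
From mathcomp Require Import all_classical all_reals all_analysis.
Set Implicit Arguments. Unset Strict Implicit. Unset Printing Implicit Defensive.
Import Order.TTheory GRing.Theory Num.Theory.
Import numFieldNormedType.Exports.
Local Open Scope classical_set_scope.
Local Open Scope ring_scope.

Section LatticeDefs.
Variables (R : realType) (n : nat).
Notation V := 'rV[R]_n.

(* the (real-bilinear extension of the) form, given by a Gram matrix Q in
   the standard coordinates of V = R^n *)
Definition bform (Q : 'M[R]_n) (x y : V) : R := (x *m Q *m y^T) 0 0.

Definition is_lattice (L : set V) : Prop :=
  exists B : 'M[R]_n, B \in unitmx /\
    L = [set z *m B | z in [set z : V | forall i, z 0 i \is a Num.int]].

Definition even_lattice (Q : 'M[R]_n) (L : set V) : Prop :=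
  forall x y, L x -> L y ->
    bform Q x y \is a Num.int /\ (bform Q x x / 2) \is a Num.int.

Definition pos_cone (Q : 'M[R]_n) (h0 : V) : set V :=
  @connected_component ('rV[R]_n : topologicalType) [set x | 0 < bform Q x x] h0.

Definition hyp_space (Q : 'M[R]_n) (h0 : V) : set V :=
  [set x | pos_cone Q h0 x /\ bform Q x x = 1].

Definition roots (Q : 'M[R]_n) (L : set V) : set V :=
  [set r | L r /\ bform Q r r = -2].

Definition chamber_domain (Q : 'M[R]_n) (h0 : V) (L : set V) : set V :=
  [set x | hyp_space Q h0 x /\ forall r, roots Q L r -> bform Q x r != 0].

Definition is_chamber (Q : 'M[R]_n) (h0 : V) (L : set V) (D : set V) : Prop :=
  exists x, chamber_domain Q h0 L x /\
            D = @connected_component ('rV[R]_n : topologicalType) (chamber_domain Q h0 L) x.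

(* isometries of L, represented by their R-linear extension v |-> v *m M *)
Definition isometry_of (Q : 'M[R]_n) (L : set V) (M : 'M[R]_n) : Prop :=
  M \in unitmx /\ [set v *m M | v in L] = L /\
  forall x y, L x -> L y -> bform Q (x *m M) (y *m M) = bform Q x y.

Definition Oplus (Q : 'M[R]_n) (h0 : V) (L : set V) (M : 'M[R]_n) : Prop :=
  isometry_of Q L M /\ [set v *m M | v in pos_cone Q h0] = pos_cone Q h0.

Definition AutD (Q : 'M[R]_n) (h0 : V) (L : set V) (D : set V)
    (M : 'M[R]_n) : Prop :=
  Oplus Q h0 L M /\ [set v *m M | v in D] = D.

Definition exc_lattice (Q : 'M[R]_n) (h0 : V) (L : set V) (D : set V) : set V :=
  [set v | L v /\ finite_set [set v *m M | M in AutD Q h0 L D]].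

End LatticeDefs.

Definition hyperbolic_form (R : realType) (n : nat) (Q : 'M[R]_n.+1) : Prop :=
  Q^T = Q /\ exists P : 'M[R]_n.+1, P \in unitmx /\
    P *m Q *m P^T = diag_mx (\row_i (if i == ord0 then 1 else -1)).

(* Roots of [L] are roots of [L'], so the chamber domain of [L'] lies in that
   of [L] and every chamber of [L'] lies in a chamber of [L]; the chamber
   domain of [L'] is nonempty because the countably many root hyperplanes
   cannot cover a short arc of the moment curve through [h0].
   For the exceptional lattices, every [M] in Aut(D') maps [L] to one of the
   finitely many groups between [L'] and [m L'], [m] the index of [L] in [L'].
   If [M] and [M0] give the same group, [M M0^-1] preserves [L] and [D'], hence
   the chamber [D] containing [D'], so it lies in Aut(D).  Hence the
   Aut(D')-orbit of [v] is covered by finitely many translates of its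
   Aut(D)-orbit. *)

From Pilot Require Import Defs.
From HB Require Import structures.
From mathcomp Require Import all_boot all_order all_algebra.
From mathcomp Require Import all_classical all_reals all_analysis.
From mathcomp Require Import ring lra.
Import Order.TTheory GRing.Theory Num.Theory.
Import numFieldNormedType.Exports.
Local Open Scope classical_set_scope.
Local Open Scope ring_scope.
Set Implicit Arguments. Unset Strict Implicit. Unset Printing Implicit Defensive.

Section LatticeSpan.
Variables (R : realType) (k : nat).
Notation V := 'rV[R]_k.

Definition intmx a b (z : 'M[int]_(a, b)) : 'M[R]_(a, b) := map_mx intr z.

Lemma intmxM a b c (x : 'M[int]_(a, b)) (y : 'M[int]_(b, c)) :
  intmx (x *m y) = intmx x *m intmx y.
Proof. exact: (map_mxM (intr : {rmorphism int -> R})). Qed.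

Lemma int_rowP (z : V) :
  (forall i, z 0 i \is a Num.int) <-> exists zi : 'rV[int]_k, z = intmx zi.
Proof.
split=> [zZ|[zi ->] i]; last by rewrite mxE rpred_int.
exists (\row_i Num.floor (z 0 i)); apply/rowP => i.
by rewrite !mxE; apply/eqP; rewrite eq_sym -intrEfloor zZ.
Qed.

Definition lattice_span (B : 'M[R]_k) : set V :=
  [set z *m B | z in [set z : V | forall i, z 0 i \is a Num.int]].

Lemma lattice_spanP B v :
  lattice_span B v <-> exists zi : 'rV[int]_k, v = intmx zi *m B.
Proof.
split=> [[z /int_rowP [zi ->] <-]|[zi ->]]; first by exists zi.
by exists (intmx zi) => //; apply/int_rowP; exists zi.
Qed.

Lemma lattice_span0 B : lattice_span B 0.
Proof. by apply/lattice_spanP; exists 0; rewrite /intmx map_mx0 mul0mx. Qed.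

Lemma lattice_spanB B x y :
  lattice_span B x -> lattice_span B y -> lattice_span B (x - y).
Proof.
move=> /lattice_spanP [a ->] /lattice_spanP [b ->]; apply/lattice_spanP.
by exists (a - b); rewrite -mulmxBl /intmx map_mxB.
Qed.

Lemma lattice_span_row B i : lattice_span B (row i B).
Proof.
apply/lattice_spanP; exists (delta_mx 0 i); rewrite rowE; congr (_ *m _).
by apply/matrixP => a b; rewrite !mxE; case: (_ && _).
Qed.

Lemma countable_lattice_span B : countable (lattice_span B).
Proof.
have -> : lattice_span B = [set intmx zi *m B | zi in [set: 'rV[int]_k]].
  apply/seteqP; split=> v; first by move=> /lattice_spanP [zi ->]; exists zi.
  by move=> [zi _ <-]; apply/lattice_spanP; exists zi.
exact: card_le_trans (card_image_le _ _) (countableP _).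
Qed.

End LatticeSpan.

Lemma is_latticeP (R : realType) (k : nat) (L : set 'rV[R]_k) :
  is_lattice L -> exists2 B, B \in unitmx & L = lattice_span B.
Proof. by move=> [B [uB ->]]; exists B. Qed.

Section BilinearForm.
Variables (R : realType) (k : nat).
Notation V := 'rV[R]_k.
Implicit Types (Q M : 'M[R]_k) (x y z : V).

Lemma bformDl Q x y z : bform Q (x + y) z = bform Q x z + bform Q y z.
Proof. by rewrite /bform !mulmxDl mxE. Qed.

Lemma bformDr Q x y z : bform Q z (x + y) = bform Q z x + bform Q z y.
Proof. by rewrite /bform linearD /= mulmxDr mxE. Qed.

Lemma bformZl Q c x z : bform Q (c *: x) z = c * bform Q x z.
Proof. by rewrite /bform -!scalemxAl mxE. Qed.

Lemma bformZr Q c x z : bform Q z (c *: x) = c * bform Q z x.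
Proof. by rewrite /bform linearZ /= -scalemxAr mxE. Qed.

Lemma bform_coordE Q x z : bform Q x z = \sum_j x 0 j * (Q *m z^T) j 0.
Proof. by rewrite /bform -mulmxA mxE. Qed.

Lemma bform_mulmx Q M : M *m Q *m M^T = Q ->
  forall x y, bform Q (x *m M) (y *m M) = bform Q x y.
Proof.
move=> MQ x y; rewrite /bform trmx_mul !mulmxA -(mulmxA x M) -(mulmxA x (M *m Q)).
by rewrite MQ.
Qed.

Lemma lattice_isometry_gram Q B M : B \in unitmx ->
  (forall x y, lattice_span B x -> lattice_span B y ->
     bform Q (x *m M) (y *m M) = bform Q x y) ->
  M *m Q *m M^T = Q.
Proof.
move=> uB isoM.
have entryE (X : 'M[R]_k) i j : (B *m X *m B^T) i j = bform X (row i B) (row j B).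
  by rewrite /bform tr_row colE mulmxA -colE -!row_mul !mxE.
have BQB : B *m (M *m Q *m M^T) *m B^T = B *m Q *m B^T.
  apply/matrixP => i j.
  rewrite !entryE -(isoM _ _ (lattice_span_row B i) (lattice_span_row B j)).
  by rewrite /bform trmx_mul !mulmxA.
have uBt : B^T \in unitmx by rewrite unitmx_tr.
have := congr1 (fun X => invmx B *m X *m invmx B^T) BQB.
by rewrite /= -!mulmxA !mulKmx // !mulmxA !mulmxK.
Qed.

End BilinearForm.

Section MatrixImage.
Variables (R : realType) (k : nat).
Notation V := 'rV[R]_k.
Implicit Types (A B : 'M[R]_k) (P : set V).

Definition mximg A P : set V := [set x *m A | x in P].

Lemma mximgM A B P : mximg (A *m B) P = mximg B (mximg A P).
Proof.
apply/seteqP; split=> v; first by move=> [x Px <-]; exists (x *m A); [exists x|rewrite mulmxA].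
by move=> [_ [x Px <-] <-]; exists x => //; rewrite mulmxA.
Qed.

Lemma mximg1 P : mximg 1%:M P = P.
Proof.
apply/seteqP; split=> v; first by move=> [x Px <-]; rewrite mulmx1.
by move=> Pv; exists v => //; rewrite mulmx1.
Qed.

Lemma mximgV A P : A \in unitmx -> mximg A P = P -> mximg (invmx A) P = P.
Proof. by move=> uA AP; rewrite -[in LHS]AP -mximgM mulmxV // mximg1. Qed.

Lemma mximg_stable A P x : mximg A P = P -> P x -> P (x *m A).
Proof. by move=> AP Px; rewrite -AP; exists x. Qed.

Lemma mximg_preim A P y : mximg A P = P -> P y -> exists2 x, P x & y = x *m A.
Proof. by move=> AP; rewrite -{1}AP => -[x Px <-]; exists x. Qed.

End MatrixImage.

Section Connectedness.
Variables (R : realType) (k : nat).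
Notation V := 'rV[R]_k.

Lemma mulmx_continuous (N : 'M[R]_k) : continuous (fun v : V => v *m N).
Proof.
move=> u A /nbhs_ballP[e /= e0 eA].
pose S := \sum_l \sum_j `|N l j|.
have S0 : 0 <= S by apply: sumr_ge0 => l _; apply: sumr_ge0.
have S1 : 0 < 1 + S by apply: ltr_wpDr.
have d0 : 0 < e / (1 + S) by apply: divr_gt0.
apply/nbhs_ballP; exists (e / (1 + S)) => //= v [_ uv]; apply: eA; split=> // i j.
rewrite /ball /= !mxE -sumrB; apply: (le_lt_trans (ler_norm_sum _ _ _)).
apply: (@le_lt_trans _ _ (\sum_l e / (1 + S) * `|N l j|)).
  apply: ler_sum => l _; rewrite -mulrBl normrM ler_wpM2r //.
  by have /ltW := uv i l.
rewrite -mulr_sumr; apply: (@le_lt_trans _ _ (e / (1 + S) * S)).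
  apply: ler_wpM2l; first exact: ltW.
  apply: ler_sum => l _.
  by rewrite (bigD1 j) //= lerDl sumr_ge0.
by rewrite mulrAC ltr_pdivrMr // ltr_pM2l // ltr_pwDl.
Qed.

Lemma mximg_connected_component (C : set V) (N : 'M[R]_k) x : C x ->
  (forall y, C y -> C (y *m N)) ->
  mximg N (connected_component C x) `<=` connected_component C (x *m N).
Proof.
move=> Cx CN; apply: connected_component_max.
- by exists x => //; exact: connected_component_refl.
- by move=> _ [y Cy <-]; apply/CN/(connected_component_sub Cy).
- apply: connected_continuous_connected; first exact: component_connected.
  exact/continuous_subspaceT/mulmx_continuous.
Qed.

Lemma segment_connected_component (C : set V) (a b : V) :
  (forall s, 0 <= s <= 1 -> C (a + s *: b)) -> connected_component C a (a + b).
Proof.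
move=> Cab; have seg : connected [set a + s *: b | s in `[0, 1]%classic].
  apply: connected_continuous_connected; first exact: segment_connected.
  apply: continuous_subspaceT => s.
  apply: (@continuousD _ _ _ (fun=> a) (fun s : R => s *: b)).
    exact: cst_continuous.
  exact/continuousZr_tmp/cvg_id.
have in01 s : 0 <= s <= 1 -> `[0, 1]%classic s by rewrite /= in_itv.
have sub : [set a + s *: b | s in `[0, 1]%classic] `<=` connected_component C a.
  apply: connected_component_max seg.
    by exists 0; [apply: in01; rewrite lexx ler01|rewrite scale0r addr0].
  by move=> _ [s s01 <-]; apply: Cab; move: s01; rewrite /= in_itv.
by apply: sub; exists 1; [apply: in01; rewrite lexx ler01|rewrite scale1r].
Qed.

End Connectedness.

Section ChamberSymmetry.
Variables (R : realType) (k : nat) (Q : 'M[R]_k) (h0 : 'rV[R]_k).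
Notation V := 'rV[R]_k.
Notation C L := (chamber_domain Q h0 L).

(* Unlike [Oplus], the form is required to be preserved on the whole space,
   which makes the class closed under inverses. *)
Definition Oplus_gram (L : set V) (N : 'M[R]_k) :=
  [/\ N \in unitmx, N *m Q *m N^T = Q, mximg N L = L &
      mximg N (pos_cone Q h0) = pos_cone Q h0].

Lemma Oplus_gramV L N : Oplus_gram L N -> Oplus_gram L (invmx N).
Proof.
move=> [uN NQ NL Npos]; split; rewrite ?unitmx_inv ?mximgV //.
have uNt : N^T \in unitmx by rewrite unitmx_tr.
by rewrite trmx_inv -{1}NQ -!mulmxA mulKmx // mulmxV // mulmx1.
Qed.

Lemma Oplus_gramM L N M : Oplus_gram L N -> Oplus_gram L M -> Oplus_gram L (N *m M).
Proof.
move=> [uN NQ NL Npos] [uM MQ ML Mpos]; split; rewrite ?mximgM ?NL ?Npos //.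
- by rewrite unitmx_mul uN uM.
- by rewrite trmx_mul !mulmxA -(mulmxA N M) -(mulmxA N (M *m Q)) MQ.
Qed.

Lemma Oplus_gram_chamber_domain L N y : Oplus_gram L N -> C L y -> C L (y *m N).
Proof.
move=> [uN NQ NL Npos] [[posy y1] yr]; split; [split|].
- exact: mximg_stable Npos posy.
- by rewrite bform_mulmx.
- move=> _ [/(mximg_preim NL) [r Lr ->] rr].
  rewrite bform_mulmx //; apply: yr; split=> //.
  by rewrite -rr bform_mulmx.
Qed.

Lemma Oplus_gram_component L N x : C L x -> Oplus_gram L N ->
  connected_component (C L) x (x *m N) ->
  mximg N (connected_component (C L) x) `<=` connected_component (C L) x.
Proof.
move=> Cx ON xxN.
rewrite [X in _ `<=` X](same_connected_component xxN).
exact/mximg_connected_component/(fun y => Oplus_gram_chamber_domain ON).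
Qed.

(* [N] maps [D] onto the chamber containing the image of a point of [D'],
   which is [D] itself. *)
Lemma Oplus_gram_chamber L D D' N :
  is_chamber Q h0 L D -> (exists x', D' x') -> D' `<=` D ->
  Oplus_gram L N -> mximg N D' = D' -> mximg N D = D.
Proof.
move=> [x0 [Cx0 ->]] [x' D'x'] D'D ON ND'.
have Dx' : connected_component (C L) x0 x' by apply: D'D.
have Cx' : C L x' by exact: connected_component_sub Dx'.
rewrite (same_connected_component Dx').
have stable M : Oplus_gram L M -> mximg M D' = D' ->
    mximg M (connected_component (C L) x') `<=` connected_component (C L) x'.
  move=> OM MD'; apply: Oplus_gram_component => //.
  rewrite -(same_connected_component Dx'); apply: D'D.
  exact: mximg_stable MD' D'x'.
have [uN _ _ _] := ON.
apply/seteqP; split; first exact: stable.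
move=> z Dz; exists (z *m invmx N); last by rewrite mulmxKV.
apply: (stable _ (Oplus_gramV ON)); first exact: mximgV.
by exists z.
Qed.

Lemma AutD_Oplus_gram B D M : B \in unitmx ->
  AutD Q h0 (lattice_span B) D M -> Oplus_gram (lattice_span B) M.
Proof.
move=> uB [[[uM [ML MQ] Mpos] _]]; split=> //.
exact: lattice_isometry_gram uB MQ.
Qed.

End ChamberSymmetry.

Section FiniteIndex.
Variables (R : realType) (k : nat).
Notation V := 'rV[R]_k.

(* [m = |det C|] for the integral matrix [C] with [B = C B'], by Cramer's rule. *)
Lemma lattice_span_index (B B' : 'M[R]_k) :
  B \in unitmx -> lattice_span B `<=` lattice_span B' ->
  exists2 m : nat, (0 < m)%N &
    forall v, lattice_span B' v -> lattice_span B (m%:R *: v).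
Proof.
move=> uB BB'.
have /choice [f Bf] : forall i : 'I_k, exists z : 'rV[int]_k,
    row i B = intmx R z *m B'.
  by move=> i; apply/lattice_spanP/BB'/lattice_span_row.
pose Ci : 'M[int]_k := \matrix_(i, j) f i 0 j.
have BE : B = intmx R Ci *m B'.
  apply/row_matrixP => i; rewrite row_mul Bf; congr (_ *m _).
  by apply/rowP => j; rewrite !mxE.
pose d := \det Ci.
have dE : \det (intmx R Ci) = d%:~R.
  by rewrite (det_map_mx (intr : {rmorphism int -> R})).
have d0 : d != 0.
  move: uB; rewrite BE unitmx_mul => /andP [+ _].
  by rewrite unitmxE dE unitfE intr_eq0.
exists `|d|%N; first by rewrite absz_gt0.
move=> v /lattice_spanP [z ->].
have dv : lattice_span B (d%:~R *: (intmx R z *m B')).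
  apply/lattice_spanP; exists (z *m \adj Ci).
  rewrite BE !intmxM -!mulmxA (mulmxA (intmx R (\adj Ci))) -intmxM mul_adj_mx.
  rewrite /intmx (map_scalar_mx (intr : {rmorphism int -> R})) /=.
  by rewrite !mulmxA mul_mx_scalar scalemxAl.
rewrite natr_absz; have [d_ge0|d_lt0] := leP 0 d; first by rewrite ger0_norm.
rewrite ltr0_norm // intrN scaleNr -sub0r.
exact: lattice_spanB (lattice_span0 _) dv.
Qed.

Definition residue_vec (B' : 'M[R]_k) m (t : 'rV['I_m]_k) : V :=
  (\row_j (t 0 j : nat)%:R) *m B'.

Lemma lattice_span_residue (B' : 'M[R]_k) m v : (0 < m)%N -> lattice_span B' v ->
  exists t : 'rV['I_m]_k, exists2 w, lattice_span B' w & v = residue_vec B' t + m%:R *: w.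
Proof.
move=> m0 /lattice_spanP [z ->].
have m0Z : m%:Z != 0 by rewrite eqz_nat -lt0n.
have zm_lt j : (absz ((z 0%R j) %% m)%Z < m)%N.
  by rewrite -ltz_nat gez0_abs ?modz_ge0 // ltz_mod.
exists (\row_j Ordinal (zm_lt j)), (intmx R (\row_j ((z 0%R j) %/ m)%Z) *m B').
  by apply/lattice_spanP; eexists.
rewrite /residue_vec scalemxAl -mulmxDl; congr (_ *m _).
apply/rowP => j; rewrite !mxE /= natr_absz ger0_norm ?modz_ge0 //.
by rewrite {1}(divz_eq (z 0%R j) m) intrD intrM addrC mulrC.
Qed.

Definition intermediate_group (B' : 'M[R]_k) m : set (set V) :=
  [set S | [/\ S `<=` lattice_span B',
     forall w, lattice_span B' w -> S (m%:R *: w) &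
     forall x y, S x -> S y -> S (x - y)]].

(* Such a group is determined by the residues mod [m] it contains. *)
Lemma finite_intermediate_group (B' : 'M[R]_k) m : (0 < m)%N ->
  finite_set (intermediate_group B' m).
Proof.
move=> m0.
pose lift (T : {set 'rV['I_m]_k}) : set V := [set v | lattice_span B' v /\
  exists t, t \in T /\ exists2 w, lattice_span B' w & v = residue_vec B' t + m%:R *: w].
apply: (@sub_finite_set _ _ [set lift T | T in [set: {set 'rV['I_m]_k}]]);
  last by apply: finite_image; exact: finite_finset.
move=> S [SL Sm SB]; exists (finset (fun t => `[< S (residue_vec B' t) >])) => //.
have S0 : S 0 by rewrite -(scaler0 _ m%:R); apply/Sm/lattice_span0.
have SD x y : S x -> S y -> S (x + y).
  by move=> Sx Sy; rewrite -[y]opprK; apply: (SB) => //; rewrite -sub0r; apply: (SB).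
apply/seteqP; split=> v.
  move=> [Lv [t [+ [w Lw ->]]]]; rewrite finset.in_set => /asboolP St.
  exact/SD/Sm.
move=> Sv; have Lv := SL _ Sv; split=> //.
have [t [w Lw vE]] := lattice_span_residue m0 Lv.
exists t; split; last by exists w.
rewrite finset.in_set; apply/asboolP.
have -> : residue_vec B' t = v - m%:R *: w by rewrite vE addrK.
exact: SB Sv (Sm _ Lw).
Qed.

End FiniteIndex.

Section ExceptionalLattice.
Variables (R : realType) (k : nat) (Q : 'M[R]_k) (h0 : 'rV[R]_k).
Notation V := 'rV[R]_k.

Lemma Oplus_gram_AutD L D N :
  Oplus_gram Q h0 L N -> mximg N D = D -> AutD Q h0 L D N.
Proof.
move=> [uN NQ NL Npos] ND; split=> //; split=> //.
by split=> //; split=> // x y _ _; exact: bform_mulmx.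
Qed.

Lemma AutD_mulV B' (L : set V) D D' M M0 : B' \in unitmx ->
  is_chamber Q h0 L D -> (exists x', D' x') -> D' `<=` D ->
  AutD Q h0 (lattice_span B') D' M -> AutD Q h0 (lattice_span B') D' M0 ->
  mximg M L = mximg M0 L -> AutD Q h0 L D (M *m invmx M0).
Proof.
move=> uB' chD D'0 D'D AM AM0 MM0.
have OM := AutD_Oplus_gram uB' AM; have OM0 := AutD_Oplus_gram uB' AM0.
have [uM0 _ _ _] := OM0.
have [[_ MD'] [_ M0D']] := (AM, AM0).
change (mximg M D' = D') in MD'; change (mximg M0 D' = D') in M0D'.
have NL : mximg (M *m invmx M0) L = L.
  by rewrite mximgM MM0 -mximgM mulmxV // mximg1.
have ND' : mximg (M *m invmx M0) D' = D' by rewrite mximgM MD' mximgV.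
have ON : Oplus_gram Q h0 L (M *m invmx M0).
  by have [? ? _ ?] := Oplus_gramM OM (Oplus_gramV OM0); split.
exact/Oplus_gram_AutD/(Oplus_gram_chamber chD D'0 D'D ON ND').
Qed.

(* [M L] lies between [L'] and [m L'], where [m L'] is contained in [L]. *)
Lemma finite_AutD_image (B B' : 'M[R]_k) D' : B \in unitmx -> B' \in unitmx ->
  lattice_span B `<=` lattice_span B' ->
  finite_set [set mximg M (lattice_span B) | M in AutD Q h0 (lattice_span B') D'].
Proof.
move=> uB uB' BB'.
have [m m0 mB'B] := lattice_span_index uB BB'.
apply: sub_finite_set (finite_intermediate_group B' m0).
move=> _ [M AM <-]; have [uM _ ML _] := AutD_Oplus_gram uB' AM; split.
- by move=> _ [x Lx <-]; rewrite -ML; exists x => //; exact: BB'.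
- move=> w Lw; have [w' Lw' ->] := mximg_preim ML Lw.
  by exists (m%:R *: w'); [exact: mB'B | rewrite scalemxAl].
- move=> _ _ [x Lx <-] [y Ly <-]; exists (x - y); first exact: lattice_spanB.
  by rewrite mulmxBl.
Qed.

(* Choosing for every image [S] of [L] a representative [rep S] of Aut(D'),
   the Aut(D')-orbit of [v] is covered by the Aut(D)-orbit of [v] translated
   by the finitely many [rep S]. *)
Lemma exc_lattice_sub L L' D D' : is_lattice L -> is_lattice L' -> L `<=` L' ->
  is_chamber Q h0 L D -> is_chamber Q h0 L' D' -> D' `<=` D ->
  exc_lattice Q h0 L D `<=` exc_lattice Q h0 L' D'.
Proof.
move=> /is_latticeP [B uB ->] /is_latticeP [B' uB' ->] BB' chD chD' D'D.
move=> v [Lv finO]; split; first exact: BB'.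
have D'0 : exists x', D' x'.
  by case: chD' => x' [Cx' ->]; exists x'; exact: connected_component_refl.
set F := [set mximg M (lattice_span B) | M in AutD Q h0 (lattice_span B') D'].
have /choice [rep repP] : forall S, exists M0, F S ->
    AutD Q h0 (lattice_span B') D' M0 /\ mximg M0 (lattice_span B) = S.
  move=> S; case: (pselect (F S)) => [[M AM <-]|nFS]; first by exists M.
  by exists 1%:M.
set O := [set v *m M | M in AutD Q h0 (lattice_span B) D] in finO.
apply: (@sub_finite_set _ _ (\bigcup_(S in F) [set u *m rep S | u in O])).
  move=> _ [M AM <-]; set S := mximg M (lattice_span B).
  have FS : F S by exists M.
  have [AM0 M0L] := repP _ FS.
  have [uM0 _ _ _] := AutD_Oplus_gram uB' AM0.
  exists S => //; exists (v *m (M *m invmx (rep S))); last by rewrite mulmxA mulmxKV.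
  by exists (M *m invmx (rep S)) => //; exact: AutD_mulV AM AM0 _.
apply: bigcup_finite; first exact: finite_AutD_image.
by move=> S _; exact: finite_image.
Qed.

End ExceptionalLattice.

Lemma finite_poly_roots (F : idomainType) (P : {poly F}) :
  P != 0 -> finite_set [set t | P.[t] = 0].
Proof.
move=> P0; apply: contrapT => /(infinite_set_fset (size P)) [s sP sizeP].
have := @max_poly_roots _ P (finmap.enum_fset s) P0.
rewrite finmap.fset_uniq; have -> : all (root P) (finmap.enum_fset s).
  by apply/allP => x xs; apply/eqP/sP.
by move=> /(_ isT isT); rewrite ltnNge sizeP.
Qed.

Section ChamberExistence.
Variables (R : realType) (k : nat).
Notation V := 'rV[R]_k.
Implicit Types (Q : 'M[R]_k).

Definition moment_curve (t : R) : V := \row_i t ^+ i.+1.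

(* [t |-> (h0 + moment_curve t) . r] is a polynomial, nonzero since [Q r^T != 0]. *)
Lemma finite_moment_curve_orthogonal Q (h0 r : V) : bform Q r r != 0 ->
  finite_set [set t | bform Q (h0 + moment_curve t) r = 0].
Proof.
move=> rr; pose a := Q *m r^T.
pose P : {poly R} := (bform Q h0 r)%:P + \sum_j a j 0 *: 'X^(j.+1).
have PE t : P.[t] = bform Q (h0 + moment_curve t) r.
  rewrite hornerD hornerC horner_sum !bform_coordE -/a -big_split /=.
  by apply: eq_bigr => j _; rewrite hornerZ hornerXn !mxE mulrDl [_ * t ^+ _]mulrC.
have /cV0Pn [j aj] : a != 0.
  apply: contra rr => /eqP a0; rewrite bform_coordE -/a a0.
  by rewrite big1 // => j _; rewrite mxE mulr0.
have P0 : P != 0.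
  apply/eqP => /(congr1 (fun p : {poly R} => p`_j.+1)).
  rewrite coefD coefC /= add0r coef_sumMXn coef0.
  rewrite (eq_bigl (fun i => i == j)); last by move=> i; rewrite eqSS.
  by rewrite big_pred1_eq => /eqP; rewrite (negPf aj).
by apply: sub_finite_set (finite_poly_roots P0) => t /= ?; rewrite PE.
Qed.

(* A nonempty open interval is uncountable, so it contains a parameter off
   the countably many finite sets of bad parameters. *)
Lemma moment_curve_avoid Q (h0 : V) (S : set V) e : countable S ->
  (forall r, S r -> bform Q r r != 0) -> 0 < e ->
  exists t, 0 < t < e /\ forall r, S r -> bform Q (h0 + moment_curve t) r != 0.
Proof.
move=> cS Snz e0.
pose bad := \bigcup_(r in S) [set t | bform Q (h0 + moment_curve t) r = 0].
have cbad : countable bad.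
  apply: bigcup_countable => // r Sr.
  exact/finite_set_countable/finite_moment_curve_orthogonal/Snz.
have [t [te tbad]] : exists t, `]0, e[%classic t /\ ~ bad t.
  apply: contrapT => nt.
  have : countable `]0, e[%classic.
    apply: card_le_trans (subset_card_le _) cbad => t te.
    by apply: contrapT => tbad; apply: nt; exists t.
  move/countable_lebesgue_measure0; rewrite lebesgue_measure_itv /= lte_fin e0.
  by rewrite oppr0 adde0 => -[] /eqP; rewrite gt_eqF.
exists t; split; first by move: te; rewrite /= in_itv.
by move=> r Sr; apply/eqP => rt; apply: tbad; exists r.
Qed.

Definition abs_entry_sum Q := \sum_i \sum_j `|Q i j|.

Lemma abs_entry_sum_ge0 Q : 0 <= abs_entry_sum Q.
Proof. by apply: sumr_ge0 => i _; apply: sumr_ge0. Qed.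

Lemma bform_bound Q (x y : V) bx b_y : 0 <= bx -> 0 <= b_y ->
  (forall j, `|x 0 j| <= bx) -> (forall j, `|y 0 j| <= b_y) ->
  `|bform Q x y| <= bx * b_y * abs_entry_sum Q.
Proof.
move=> bx0 by0 xb yb; rewrite bform_coordE /abs_entry_sum mulr_sumr.
apply: (le_trans (ler_norm_sum _ _ _)); apply: ler_sum => i _.
rewrite normrM mxE; apply: (@le_trans _ _ (bx * `|\sum_j Q i j * y^T j 0|)).
  exact: ler_wpM2r.
rewrite -mulrA ler_wpM2l //; apply: (le_trans (ler_norm_sum _ _ _)).
by rewrite mulr_sumr; apply: ler_sum => j _; rewrite normrM mxE mulrC ler_wpM2r.
Qed.

Lemma bform_gt0_near Q (h0 : V) : 0 < bform Q h0 h0 ->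
  exists2 e, 0 < e /\ e <= 1 &
    forall p : V, (forall j, `|p 0 j| <= e) -> 0 < bform Q (h0 + p) (h0 + p).
Proof.
move=> q0; pose H := 1 + \sum_j `|h0 0 j|.
have H0 : 0 <= H by apply: addr_ge0 => //; apply: sumr_ge0.
have h0H j : `|h0 0 j| <= H.
  rewrite /H (bigD1 j) //=.
  have : 0 <= \sum_(i < k | i != j) `|h0 0 i| by apply: sumr_ge0.
  lra.
pose K := abs_entry_sum Q; have K0 : 0 <= K := abs_entry_sum_ge0 Q.
pose c := 2 * H * K + K + 1.
have c0 : 0 < c by rewrite /c ltr_wpDl // !addr_ge0 // !mulr_ge0.
pose e := Num.min 1 (bform Q h0 h0 / c).
have e0 : 0 < e by rewrite lt_min ltr01 divr_gt0.
have e1 : e <= 1 by rewrite ge_min lexx.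
have ec : e * c <= bform Q h0 h0 by rewrite -ler_pdivlMr // ge_min lexx orbT.
exists e => // p pe; rewrite !bformDl !bformDr.
have b1 := bform_bound Q (ltW e0) H0 pe h0H.
have b2 := bform_bound Q H0 (ltW e0) h0H pe.
have b3 := bform_bound Q (ltW e0) (ltW e0) pe pe.
have n1 := lerNnormlW (lexx `|bform Q p h0|).
have n2 := lerNnormlW (lexx `|bform Q h0 p|).
have n3 := lerNnormlW (lexx `|bform Q p p|).
have ee : e * e * K <= e * K by rewrite ler_wpM2r // ger_pMr.
have eH : H * e * K = e * H * K by rewrite (mulrC e).
have cE : e * c = 2 * (e * H * K) + e * K + e by rewrite /c; ring.
rewrite eH in b2; move: b1 b2 b3 n1 n2 n3 ee cE ec.
move: (e * H * K) (e * e * K) (e * K) (e * c) => X Y Z W.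
move: (bform Q p h0) (bform Q h0 p) (bform Q p p) (bform Q h0 h0) => a b d q.
move=> *; lra.
Qed.

(* Starting from [h0], move slightly along the moment curve to leave all root
   hyperplanes while staying in the positive cone, then rescale onto [H]. *)
Lemma chamber_domain_nonempty Q (h0 : V) (B' : 'M[R]_k) : 0 < bform Q h0 h0 ->
  exists y, chamber_domain Q h0 (lattice_span B') y.
Proof.
move=> q0; have [e [e0 e1] posN] := bform_gt0_near q0.
have roots_nz r : Defs.roots Q (lattice_span B') r -> bform Q r r != 0.
  by move=> [_ ->]; rewrite oppr_eq0.
have croots : countable (Defs.roots Q (lattice_span B')).
  exact: card_le_trans (subset_card_le (fun r => @proj1 _ _))
    (countable_lattice_span B').
have [t [/andP [t0 te] troots]] := moment_curve_avoid h0 croots roots_nz e0.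
set p := moment_curve t; set x := h0 + p.
have small s : 0 <= s <= 1 -> forall j, `|(s *: p) 0 j| <= e.
  move=> /andP [s0 s1] j; rewrite !mxE normrM ger0_norm // ger0_norm ?exprn_ge0 ?ltW //.
  have t1 : t <= 1 by apply: le_trans e1; exact: ltW.
  have : t ^+ j.+1 <= t by rewrite exprS ger_pMr // exprn_ile1 // ltW.
  have : s * t ^+ j.+1 <= t ^+ j.+1 by rewrite ger_pMl ?exprn_gt0.
  by move: (ltW te); lra.
set S := [set z : V | 0 < bform Q z z].
have posx : 0 < bform Q x x.
  by rewrite /x -[p]scale1r; apply/posN/small; rewrite ler01 lexx.
set c := (Num.sqrt (bform Q x x))^-1.
have c0 : 0 < c by rewrite invr_gt0 sqrtr_gt0.
have h0x : connected_component S h0 x.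
  by apply: segment_connected_component => s s01; exact/posN/small.
have xcx : connected_component S x (c *: x).
  have -> : c *: x = x + (c - 1) *: x by rewrite scalerBl scale1r addrC subrK.
  apply: segment_connected_component => s /andP [s0 s1].
  have -> : x + s *: ((c - 1) *: x) = (1 + s * (c - 1)) *: x.
    by rewrite scalerA scalerDl scale1r.
  rewrite /S /= bformZl bformZr !mulr_gt0 //; nra.
exists (c *: x); split; [split|].
- exact: connected_component_trans h0x xcx.
- rewrite bformZl bformZr mulrA -expr2 exprVn sqr_sqrtr ?ltW //.
  by rewrite mulVf // gt_eqF.
- by move=> r rroot; rewrite bformZl mulf_neq0 ?(gt_eqF c0) //; exact: troots.
Qed.

Lemma exists_nested_chambers Q (h0 : V) (L L' : set V) :
  is_lattice L' -> L `<=` L' -> 0 < bform Q h0 h0 ->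
  exists D D', is_chamber Q h0 L D /\ is_chamber Q h0 L' D' /\ D' `<=` D.
Proof.
move=> /is_latticeP [B' _ ->] LL' q0.
have [y Cy] := chamber_domain_nonempty B' q0.
have C'C : chamber_domain Q h0 (lattice_span B') `<=` chamber_domain Q h0 L.
  by move=> z [zH zr]; split=> // r [Lr rr]; apply: zr; split=> //; exact: LL'.
exists (connected_component (chamber_domain Q h0 L) y),
       (connected_component (chamber_domain Q h0 (lattice_span B')) y).
split; first by exists y; split=> //; exact: C'C.
split; first by exists y.
apply: connected_component_max; last exact: component_connected.
  exact: connected_component_refl.
by move=> z /connected_component_sub /C'C.
Qed.

End ChamberExistence.

Unset Implicit Arguments.

Theorem lemma3p1 (R : realType) (n : nat) (Q : 'M[R]_n.+1)
    (L L' : set 'rV[R]_n.+1) (h0 : 'rV[R]_n.+1) :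
  hyperbolic_form Q ->
  is_lattice L -> even_lattice Q L ->
  is_lattice L' -> even_lattice Q L' ->
  L `<=` L' ->
  0 < bform Q h0 h0 ->
  (exists D D', is_chamber Q h0 L D /\ is_chamber Q h0 L' D' /\ D' `<=` D) /\
  (forall D D', is_chamber Q h0 L D -> is_chamber Q h0 L' D' -> D' `<=` D ->
     exc_lattice Q h0 L D `<=` exc_lattice Q h0 L' D').
Proof.
move=> _ latL _ latL' _ LL' q0; split; first exact: exists_nested_chambers.
by move=> D D' chD chD' D'D; exact: exc_lattice_sub.
Qed.
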